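(* Let $\mathcal H_A,\mathcal H_B$ be complex Hilbert spaces of finite dimensions $d_A,d_B$, let $\rho_{AB}$ be a positive definite density matrix on $\mathcal H_A\otimes\mathcal H_B$, let $\rho_A=\mathrm{tr}_B(\rho_{AB})$ be its partial trace over $B$, and let $\alpha>1$. Define \[ I_\alpha(A;B)_\rho=\inf_{\sigma_B} D_\alpha(\rho_{AB}\,\|\,\rho_A\otimes\sigma_B), \] where the infimum is over positive definite density matrices $\sigma_B$ on $\mathcal H_B$ and $D_\alpha(\rho\|\sigma)=\frac{1}{\alpha-1}\log\mathrm{tr}\,[\rho^\alpha\sigma^{1-\alpha}]$. Then \[ I_\alpha(A;B)_\rho\ \ge\ \frac{\alpha}{\alpha-1}\Big(\log(d_Ad_B)+\frac{1}{d_Ad_B}\log\det(\rho_{AB})\Big). \]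
   Context: A density matrix is a Hermitian positive semidefinite matrix with trace $1$. Real powers of positive definite matrices are defined by functional calculus. $\log$ denotes the logarithm to a fixed base greater than $1$. *)

From HB Require Import structures.
From mathcomp Require Import all_boot all_order all_algebra.
From mathcomp Require Import complex mxtens.
From mathcomp Require Import boolp classical_sets reals exp.

Set Implicit Arguments.
Unset Strict Implicit.
Unset Printing Implicit Defensive.

Import Order.TTheory GRing.Theory Num.Theory.
Local Open Scope ring_scope.
Local Open Scope complex_scope.

Section QDefs.
Variable R : realType.
Local Notation C := R[i].

Definition mxadj (m n : nat) (A : 'M[C]_(m, n)) : 'M[C]_(n, m) :=
  (map_mx (@conjc R) A)^T.

Definition hermitian (n : nat) (A : 'M[C]_n) : Prop := mxadj A = A.

(* positive semidefinite / positive definite (order on C: z >= 0 iff z real >= 0) *)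
Definition psd (n : nat) (A : 'M[C]_n) : Prop :=
  hermitian A /\ forall x : 'cV[C]_n, 0 <= (mxadj x *m A *m x) 0 0.

Definition posdef (n : nat) (A : 'M[C]_n) : Prop :=
  hermitian A /\ forall x : 'cV[C]_n, x != 0 -> 0 < (mxadj x *m A *m x) 0 0.

Definition density (n : nat) (A : 'M[C]_n) : Prop := psd A /\ \tr A = 1.

Definition unitary (n : nat) (U : 'M[C]_n) : Prop := U *m mxadj U = 1%:M.

(* real power of a positive definite matrix by functional calculus:
   if A = U diag(l) U^* with U unitary and l > 0, then A^s = U diag(l^s) U^*.
   (The value is independent of the chosen diagonalization.) *)
Definition mpow (n : nat) (A : 'M[C]_n) (s : R) : 'M[C]_n :=
  xget 0 [set B | exists (U : 'M[C]_n) (l : 'rV[R]_n),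
    [/\ unitary U, (forall j, 0 < l 0 j),
        A = U *m diag_mx (map_mx (fun x => x%:C) l) *m mxadj U &
        B = U *m diag_mx (map_mx (fun x => (powR x s)%:C) l) *m mxadj U]].

Definition logb (b x : R) : R := ln x / ln b.

Definition ptraceB (dA dB : nat) (rho : 'M[C]_(dA * dB)) : 'M[C]_dA :=
  \matrix_(i, i') \sum_(j < dB) rho (mxtens_index (i, j)) (mxtens_index (i', j)).

Definition Dalpha (b a : R) (n : nat) (rho sigma : 'M[C]_n) : R :=
  (a - 1)^-1 * logb b (complex.Re (\tr (mpow rho a *m mpow sigma (1 - a)))).

Definition Ialpha (b a : R) (dA dB : nat) (rho : 'M[C]_(dA * dB)) : R :=
  inf [set x | exists sigma : 'M[C]_dB,
         [/\ posdef sigma, density sigma &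
             x = Dalpha b a rho (ptraceB rho *t sigma)]].

End QDefs.

(* Write rho = U diag(l) U^* and T = rho_A (x) sigma = V diag(mu) V^*, and let
   n = dA dB.  Then tr[rho^a T^(1-a)] = sum_(i,j) l_i^a mu_j^(1-a) |(U^*V)_ij|^2,
   and since U^* V is unitary the weights |(U^* V)_ij|^2 / n form a probability
   distribution on pairs with uniform marginals.  Jensen's inequality for ln
   gives
     ln tr[rho^a T^(1-a)] >= ln n + (a/n) ln det rho + ((1-a)/n) ln det T,
   and AM-GM for the eigenvalues of the density matrix T,
   (1/n) ln det T <= - ln n, together with 1 - a < 0, yields
     ln tr[rho^a T^(1-a)] >= a (ln n + (1/n) ln det rho).
   Dividing by (a - 1) ln b bounds every D_a(rho || rho_A (x) sigma). *)

From Pilot Require Import Defs.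
From HB Require Import structures.
From mathcomp Require Import all_boot all_order all_algebra.
From mathcomp Require Import complex mxtens.
From mathcomp Require Import boolp classical_sets reals exp.
From mathcomp Require Import spectral.
From mathcomp Require Import ring lra.

Set Implicit Arguments.
Unset Strict Implicit.
Unset Printing Implicit Defensive.
Import Order.TTheory GRing.Theory Num.Theory.
Local Open Scope ring_scope.
Local Open Scope complex_scope.

Section Adjoint.
Variable R : realType.
Local Notation C := R[i].

Lemma mxadjE m n (A : 'M[C]_(m, n)) : mxadj A = (A ^t* )%sesqui.
Proof. by rewrite /mxadj map_trmx. Qed.

Lemma mxadjM m n p (A : 'M[C]_(m, n)) (B : 'M[C]_(n, p)) :
  mxadj (A *m B) = mxadj B *m mxadj A.
Proof. by rewrite /mxadj map_mxM trmx_mul. Qed.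

Lemma mxadjK m n (A : 'M[C]_(m, n)) : mxadj (mxadj A) = A.
Proof. by apply/matrixP => i j; rewrite !mxE conjcK. Qed.

Lemma mxadj_tens m n p q (A : 'M[C]_(m, n)) (B : 'M[C]_(p, q)) :
  mxadj (A *t B) = mxadj A *t mxadj B.
Proof. by rewrite /mxadj map_mxT trmx_tens. Qed.

Lemma unitaryP n (U : 'M[C]_n) : reflect (unitary U) (U \is unitarymx).
Proof. by rewrite /unitary mxadjE; apply: unitarymxP. Qed.

Lemma unitary_mxadj n (U : 'M[C]_n) : unitary U -> unitary (mxadj U).
Proof. by move/unitaryP => uU; apply/unitaryP; rewrite mxadjE trmxC_unitary. Qed.

Lemma unitary_mxadjC n (U : 'M[C]_n) : unitary U -> mxadj U *m U = 1%:M.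
Proof. by move/unitary_mxadj; rewrite /unitary mxadjK. Qed.

Lemma unitary_mxadjM n (U V : 'M[C]_n) :
  unitary U -> unitary V -> unitary (mxadj U *m V).
Proof.
by move=> /unitary_mxadj/unitaryP uU /unitaryP uV; apply/unitaryP/mul_unitarymx.
Qed.

End Adjoint.

Section LogInequalities.
Variable R : realType.

Lemma sum_eq1_dim_gt0 n (f : 'I_n -> R) : \sum_i f i = 1 -> (0 < n)%N.
Proof. by case: n f => // f; rewrite big_ord0 => /eqP; rewrite eq_sym oner_eq0. Qed.

Lemma ln_le_subr1 (y : R) : 0 < y -> ln y <= y - 1.
Proof.
by move=> y_gt0; have := @le_ln1Dx R (y - 1); rewrite [1 + _]addrC subrK; apply; lra.
Qed.

Lemma ln_prod (I : finType) (x : I -> R) : (forall k, 0 < x k) ->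
  ln (\prod_k x k) = \sum_k ln (x k).
Proof.
move=> x_gt0; rewrite /index_enum; elim: (Finite.enum I) => [|k s IH].
  by rewrite !big_nil ln1.
by rewrite !big_cons lnM ?IH // posrE // prodr_gt0.
Qed.

Lemma convex_comb_gt0 (I : finType) (p x : I -> R) :
  (forall k, 0 <= p k) -> \sum_k p k = 1 -> (forall k, 0 < x k) ->
  0 < \sum_k p k * x k.
Proof.
move=> p_ge0 p_sum1 x_gt0.
have [k /= pk_gt0] : exists k, true && (0 < p k).
  by apply: psumr_neq0P => //; rewrite p_sum1; apply/eqP; rewrite oner_neq0.
rewrite (bigD1 k) //= ltr_pwDl ?mulr_gt0 //.
by apply: sumr_ge0 => i _; rewrite mulr_ge0 // ltW.
Qed.

(* Concavity of [ln]: compare each [ln (x k)] with the tangent line of [ln] at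
   the mean [M]. *)
Lemma jensen_ln (I : finType) (p x : I -> R) :
  (forall k, 0 <= p k) -> \sum_k p k = 1 -> (forall k, 0 < x k) ->
  \sum_k p k * ln (x k) <= ln (\sum_k p k * x k).
Proof.
move=> p_ge0 p_sum1 x_gt0; set M := \sum_k p k * x k.
have M_gt0 : 0 < M by apply: convex_comb_gt0.
rewrite -subr_le0 -[ln M]mul1r -p_sum1 mulr_suml -sumrB.
apply: (le_trans (y := \sum_k p k * (x k / M - 1))).
  apply: ler_sum => k _; rewrite -mulrBr ler_wpM2l //.
  by rewrite -ln_div ?posrE // ln_le_subr1 // divr_gt0.
rewrite (eq_bigr (fun k => p k * x k / M - p k)) => [|k _]; last first.
  by rewrite mulrBr mulr1 mulrA.
by rewrite sumrB -mulr_suml p_sum1 divff ?subrr // gt_eqF.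
Qed.

Lemma mean_ln_le_Nln_card n (mu : 'I_n -> R) : (forall k, 0 < mu k) ->
  \sum_k mu k = 1 -> n%:R^-1 * \sum_k ln (mu k) <= - ln n%:R.
Proof.
move=> mu_gt0 mu_sum1; have n_gt0 := sum_eq1_dim_gt0 mu_sum1.
have n_neq0 : n%:R != 0 :> R by rewrite pnatr_eq0 -lt0n.
have := @jensen_ln _ (fun _ => n%:R^-1) mu.
rewrite -!mulr_sumr mu_sum1 mulr1 sumr_const card_ord -[n%:R^-1 *+ n]mulr_natr mulVf //.
by rewrite lnV ?posrE ?ltr0n //; apply=> // k; rewrite invr_ge0 ler0n.
Qed.

Definition doubly_stochastic n (w : 'M[R]_n) : Prop :=
  [/\ forall i j, 0 <= w i j, forall i, \sum_j w i j = 1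
    & forall j, \sum_i w i j = 1].

Lemma doubly_stochastic_sumD n (w : 'M[R]_n) (f g : 'I_n -> R) :
  doubly_stochastic w ->
  \sum_i \sum_j w i j * (f i + g j) = \sum_i f i + \sum_j g j.
Proof.
case=> _ w_row w_col.
rewrite (eq_bigr (fun i => f i + \sum_j w i j * g j)) => [|i _]; last first.
  rewrite (eq_bigr (fun j => w i j * f i + w i j * g j)) => [|j _].
    by rewrite big_split -mulr_suml w_row mul1r.
  exact: mulrDr.
rewrite big_split exchange_big /=; congr (_ + _); apply: eq_bigr => j _.
by rewrite -mulr_suml w_col mul1r.
Qed.

Lemma ln_doubly_stochastic_sum_ge n (x y : 'I_n -> R) (w : 'M[R]_n) :
  (0 < n)%N -> (forall i, 0 < x i) -> (forall j, 0 < y j) -> doubly_stochastic w ->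
  ln n%:R + n%:R^-1 * (\sum_i ln (x i) + \sum_j ln (y j))
    <= ln (\sum_i \sum_j x i * y j * w i j).
Proof.
move=> n_gt0 x_gt0 y_gt0 w_ds; have [w_ge0 w_row _] := w_ds.
have n_pos : 0 < n%:R :> R by rewrite ltr0n.
pose p (k : 'I_n * 'I_n) := n%:R^-1 * w k.1 k.2.
pose z (k : 'I_n * 'I_n) := x k.1 * y k.2.
have p_ge0 k : 0 <= p k by rewrite mulr_ge0 // invr_ge0 ltW.
have p_sum1 : \sum_k p k = 1.
  rewrite -mulr_sumr -(pair_big xpredT xpredT (fun i j => w i j)) /=.
  by rewrite (eq_bigr (fun=> 1)) // sumr_const card_ord mulVf ?gt_eqF.
have z_gt0 k : 0 < z k by rewrite mulr_gt0.
have mean : \sum_k p k * z k = n%:R^-1 * \sum_i \sum_j x i * y j * w i j.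
  rewrite (pair_big xpredT xpredT (fun i j => x i * y j * w i j)) mulr_sumr.
  by apply: eq_bigr => k _; rewrite /p /z; ring.
have logmean :
    \sum_k p k * ln (z k) = n%:R^-1 * (\sum_i ln (x i) + \sum_j ln (y j)).
  rewrite -(doubly_stochastic_sumD (fun i => ln (x i)) (fun j => ln (y j)) w_ds).
  rewrite (pair_big xpredT xpredT (fun i j => w i j * (ln (x i) + ln (y j)))).
  by rewrite mulr_sumr; apply: eq_bigr => k _; rewrite /p /z lnM ?posrE // mulrA.
have T_gt0 : 0 < \sum_i \sum_j x i * y j * w i j.
  have n_inv_pos : 0 < n%:R^-1 :> R by rewrite invr_gt0.
  by rewrite -(pmulr_rgt0 _ n_inv_pos) -mean convex_comb_gt0.
have := jensen_ln p_ge0 p_sum1 z_gt0.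
rewrite mean logmean lnM ?posrE ?invr_gt0 // lnV ?posrE //.
lra.
Qed.

End LogInequalities.

Section Spectral.
Variable R : realType.
Local Notation C := R[i].
Local Notation cdiag l := (diag_mx (map_mx (fun x : R => x%:C) l)).

Definition spectral_decomp n (A U : 'M[C]_n) (l : 'rV[R]_n) : Prop :=
  [/\ unitary U, forall j, 0 < l 0 j & A = U *m cdiag l *m mxadj U].

Lemma posdef_spectral_decomp n (A : 'M[C]_n) :
  posdef A -> exists U l, spectral_decomp A U l.
Proof.
move=> [hA pA].
have nA : A \is normalmx by apply/normalmxP; rewrite -mxadjE hA.
have := orthomx_spectralP nA; rewrite invmx_unitary ?spectral_unitarymx // -mxadjE.
set P := spectralmx A; set D := spectral_diag A => eA.
have uP : unitary P by apply/unitaryP/spectral_unitarymx.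
have D_gt0 j : 0 < D 0 j.
  set e : 'cV[C]_n := delta_mx j 0.
  have /pA : mxadj P *m e != 0.
    apply/eqP => /(congr1 (mulmx P)); rewrite mulmxA uP mul1mx mulmx0.
    by move/matrixP => /(_ j 0); rewrite !mxE !eqxx => /eqP; rewrite oner_eq0.
  rewrite mxadjM mxadjK eA !mulmxA -(mulmxA _ P) uP mulmx1 -(mulmxA _ P) uP mulmx1.
  have -> : mxadj e = delta_mx 0 j.
    by apply/matrixP => x y; rewrite !mxE conjc_nat andbC.
  by rewrite -rowE -colE !mxE eqxx mulr1n.
exists (mxadj P), (\row_j complex.Re (D 0 j)); split.
- exact: unitary_mxadj.
- by move=> j; rewrite mxE; have := D_gt0 j; rewrite ltcE => /andP[].
- rewrite mxadjK eA; congr (_ *m diag_mx _ *m _); apply/matrixP => i j.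
  rewrite !mxE ord1; have := D_gt0 j; rewrite ltcE => /andP[/eqP + _].
  by case: (D 0 j) => x y /= ->.
Qed.

Lemma mpow_spectral_decomp n (A U : 'M[C]_n) (l : 'rV[R]_n) s :
  spectral_decomp A U l -> exists U' l', spectral_decomp A U' l' /\
    mpow A s = U' *m cdiag (map_mx (fun x : R => powR x s) l') *m mxadj U'.
Proof.
move=> [uU l_gt0 eA]; rewrite /mpow.
case: xgetP => [B -> [U' [l' [uU' l'_gt0 eA' ->]]] | noB].
  exists U', l'; split=> //; congr (_ *m diag_mx _ *m _).
  by apply/matrixP => i j; rewrite !mxE.
exfalso; apply: (noB (U *m cdiag (map_mx (fun x : R => powR x s) l) *m mxadj U)).
exists U, l; split=> //; congr (_ *m diag_mx _ *m _).
by apply/matrixP => i j; rewrite !mxE.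
Qed.

Lemma mxtrace_unitary_conj n (U D : 'M[C]_n) :
  unitary U -> \tr (U *m D *m mxadj U) = \tr D.
Proof. by move=> uU; rewrite mxtrace_mulC mulmxA unitary_mxadjC // mul1mx. Qed.

Lemma det_unitary_conj n (U D : 'M[C]_n) :
  unitary U -> \det (U *m D *m mxadj U) = \det D.
Proof. by move=> uU; rewrite !det_mulmx mulrAC -det_mulmx uU det1 mul1r. Qed.

Lemma spectral_decomp_trace n (A U : 'M[C]_n) l :
  spectral_decomp A U l -> \tr A = (\sum_j l 0 j)%:C.
Proof.
case=> uU _ ->; rewrite mxtrace_unitary_conj // mxtrace_diag rmorph_sum.
by apply: eq_bigr => j _; rewrite mxE.
Qed.

Lemma spectral_decomp_det n (A U : 'M[C]_n) l :
  spectral_decomp A U l -> \det A = (\prod_j l 0 j)%:C.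
Proof.
case=> uU _ ->; rewrite det_unitary_conj // det_diag rmorph_prod.
by apply: eq_bigr => j _; rewrite mxE.
Qed.

End Spectral.

Section TraceProduct.
Variable R : realType.
Local Notation C := R[i].
Local Notation cdiag l := (diag_mx (map_mx (fun x : R => x%:C) l)).

Lemma Re_sum (I : finType) (F : I -> C) :
  complex.Re (\sum_i F i) = \sum_i complex.Re (F i).
Proof. exact: (raddf_sum (@complex.Re R : Rcomplex R -> R)). Qed.

Definition sqnorm_mx m n (W : 'M[C]_(m, n)) : 'M[R]_(m, n) :=
  \matrix_(i, j) complex.Re (W i j * (W i j)^*%C).

Lemma sqnorm_mx_ge0 m n (W : 'M[C]_(m, n)) i j : 0 <= sqnorm_mx W i j.
Proof.
rewrite mxE; case: (W i j) => x y /=.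
by rewrite mulrN opprK addr_ge0 // -expr2 sqr_ge0.
Qed.

Lemma unitary_sqnorm_sumr n (W : 'M[C]_n) i :
  unitary W -> \sum_j sqnorm_mx W i j = 1.
Proof.
move=> /(congr1 (fun M : 'M[C]_n => complex.Re (M i i))).
rewrite /= !mxE Re_sum eqxx mulr1n -[complex.Re 1]/(1 : R) => <-.
by apply: eq_bigr => j _; rewrite !mxE.
Qed.

Lemma unitary_sqnorm_suml n (W : 'M[C]_n) j :
  unitary W -> \sum_i sqnorm_mx W i j = 1.
Proof.
move=> /unitary_mxadj/(unitary_sqnorm_sumr j) <-.
by apply: eq_bigr => i _; rewrite /mxadj !mxE conjcK mulrC.
Qed.

Lemma sqnorm_mx_doubly_stochastic n (W : 'M[C]_n) :
  unitary W -> doubly_stochastic (sqnorm_mx W).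
Proof.
move=> uW; split=> [i j|i|j]; first exact: sqnorm_mx_ge0.
- exact: unitary_sqnorm_sumr.
- exact: unitary_sqnorm_suml.
Qed.

Lemma Re_mxtrace_conj_diag n (U V : 'M[C]_n) (a b : 'rV[R]_n) :
  complex.Re (\tr (U *m cdiag a *m mxadj U *m (V *m cdiag b *m mxadj V)))
  = \sum_i \sum_j a 0 i * b 0 j * sqnorm_mx (mxadj U *m V) i j.
Proof.
have -> : \tr (U *m cdiag a *m mxadj U *m (V *m cdiag b *m mxadj V))
    = \tr (cdiag a *m (mxadj U *m V) *m cdiag b *m mxadj (mxadj U *m V)).
  by rewrite -!mulmxA mxtrace_mulC mxadjM mxadjK !mulmxA.
move: (mxadj U *m V) => W.
rewrite /mxtrace Re_sum; apply: eq_bigr => i _.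
rewrite mxE Re_sum; apply: eq_bigr => j _.
rewrite mul_mx_diag mul_diag_mx !mxE.
by case: (W i j) => x y /=; ring.
Qed.

End TraceProduct.

Section Tensor.
Variable R : realType.
Local Notation C := R[i].
Local Notation cdiag l := (diag_mx (map_mx (fun x : R => x%:C) l)).

Lemma sum_mxtens_index (V : nmodType) m n (F : 'I_(m * n) -> V) :
  \sum_k F k = \sum_i \sum_j F (mxtens_index (i, j)).
Proof.
rewrite pair_big /= (reindex (@mxtens_index m n)) /=; last first.
  by exists (@mxtens_unindex m n) => k _; [apply: mxtens_indexK | apply: mxtens_unindexK].
by apply: eq_bigr => -[i j].
Qed.

Lemma mxtens_index_eq m n (i i' : 'I_m) (j j' : 'I_n) :
  (mxtens_index (i, j) == mxtens_index (i', j')) = (i == i') && (j == j').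
Proof. by rewrite (can_eq (@mxtens_indexK m n)) xpair_eqE. Qed.

Lemma sum_mul_eq_natr m (F : 'I_m -> C) c : \sum_k F k * (k == c)%:R = F c.
Proof.
rewrite (bigD1 c) //= eqxx mulr1 big1 ?addr0 // => k /negbTE ->.
by rewrite mulr0.
Qed.

Lemma mxtrace_tens m n (A : 'M[C]_m) (B : 'M[C]_n) :
  \tr (A *t B) = \tr A * \tr B.
Proof.
rewrite /mxtrace sum_mxtens_index mulr_suml; apply: eq_bigr => i _.
by rewrite mulr_sumr; apply: eq_bigr => j _; rewrite tensmxE.
Qed.

Lemma tens1mx m n : (1%:M : 'M[C]_m) *t (1%:M : 'M[C]_n) = 1%:M.
Proof.
apply/matrixP => k k'.
case: (mxtens_indexP k) => i j; case: (mxtens_indexP k') => i' j'.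
rewrite tensmxE !mxE mxtens_index_eq.
by case: (i == i'); case: (j == j'); rewrite ?mulr1 ?mul0r ?mulr0.
Qed.

Definition tens_rV m n (l1 : 'rV[R]_m) (l2 : 'rV[R]_n) : 'rV[R]_(m * n) :=
  \row_k (l1 0 (mxtens_unindex k).1 * l2 0 (mxtens_unindex k).2).

Lemma tens_cdiag m n (l1 : 'rV[R]_m) (l2 : 'rV[R]_n) :
  cdiag l1 *t cdiag l2 = cdiag (tens_rV l1 l2).
Proof.
apply/matrixP => k k'.
case: (mxtens_indexP k) => i j; case: (mxtens_indexP k') => i' j'.
rewrite tensmxE !mxE mxtens_index_eq mxtens_indexK /= rmorphM.
by case: (i == i'); case: (j == j'); rewrite ?mulr1n ?mulr0n ?mul0r ?mulr0.
Qed.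

Lemma unitary_tens m n (U1 : 'M[C]_m) (U2 : 'M[C]_n) :
  unitary U1 -> unitary U2 -> unitary (U1 *t U2).
Proof. by move=> u1 u2; rewrite /unitary mxadj_tens tensmx_mul u1 u2 tens1mx. Qed.

Lemma spectral_decomp_tens m n (A U1 : 'M[C]_m) (B U2 : 'M[C]_n) l1 l2 :
  spectral_decomp A U1 l1 -> spectral_decomp B U2 l2 ->
  spectral_decomp (A *t B) (U1 *t U2) (tens_rV l1 l2).
Proof.
move=> [u1 l1_gt0 ->] [u2 l2_gt0 ->]; split.
- exact: unitary_tens.
- by move=> k; rewrite mxE mulr_gt0.
- by rewrite mxadj_tens -tens_cdiag !tensmx_mul.
Qed.

End Tensor.

Section PartialTrace.
Variable R : realType.
Local Notation C := R[i].
Variables dA dB : nat.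
Implicit Types rho : 'M[C]_(dA * dB).

Lemma mxtrace_ptraceB rho : \tr (ptraceB rho) = \tr rho.
Proof.
by rewrite [RHS]/mxtrace sum_mxtens_index; apply: eq_bigr => i _; rewrite mxE.
Qed.

Lemma hermitian_ptraceB rho : Defs.hermitian rho -> Defs.hermitian (ptraceB rho).
Proof.
move=> h; apply/matrixP => i i'; rewrite !mxE rmorph_sum.
by apply: eq_bigr => j _; rewrite -{2}h !mxE.
Qed.

(* The isometry [x |-> x (x) e_j] of H_A into H_A (x) H_B. *)
Definition tens_basis_mx (j : 'I_dB) : 'M[C]_(dA * dB, dA) :=
  \matrix_(k, i) (k == mxtens_index (i, j))%:R.

Lemma tens_basis_mx_isometry j :
  mxadj (tens_basis_mx j) *m tens_basis_mx j = 1%:M.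
Proof.
apply/matrixP => i i'; rewrite !mxE.
under eq_bigr => k _ do rewrite !mxE conjc_nat.
by rewrite sum_mul_eq_natr mxtens_index_eq eqxx andbT eq_sym.
Qed.

Lemma ptraceB_sum rho :
  ptraceB rho = \sum_j mxadj (tens_basis_mx j) *m rho *m tens_basis_mx j.
Proof.
apply/matrixP => i i'; rewrite summxE mxE; apply: eq_bigr => j _.
rewrite mxE (eq_bigr (fun k =>
  rho (mxtens_index (i, j)) k * (k == mxtens_index (i', j))%:R)) => [|k _].
  by rewrite sum_mul_eq_natr.
 rewrite !mxE; congr (_ * _).
under eq_bigr => k' _ do rewrite !mxE conjc_nat mulrC.
exact: sum_mul_eq_natr.
Qed.

Lemma posdef_ptraceB rho : (0 < dB)%N -> posdef rho -> posdef (ptraceB rho).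
Proof.
move=> dB_gt0 [h_rho p_rho]; split; first exact: hermitian_ptraceB.
move=> x x_neq0; rewrite ptraceB_sum mulmx_sumr mulmx_suml summxE.
have term_gt0 j :
    0 < (mxadj x *m (mxadj (tens_basis_mx j) *m rho *m tens_basis_mx j) *m x) 0 0.
  rewrite !mulmxA -mxadjM -(mulmxA _ _ x); apply: p_rho.
  apply: contra x_neq0 => /eqP Ex0.
  by rewrite -[x]mul1mx -(tens_basis_mx_isometry j) -mulmxA Ex0 mulmx0.
rewrite (bigD1 (Ordinal dB_gt0)) //= ltr_pwDl //.
by apply: sumr_ge0 => j _; apply: ltW.
Qed.

End PartialTrace.

Section RenyiBound.
Variable R : realType.
Local Notation C := R[i].

Lemma spectral_decomp_sum1 n (A U : 'M[C]_n) l :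
  spectral_decomp A U l -> \tr A = 1 -> \sum_j l 0 j = 1.
Proof. by move=> /spectral_decomp_trace -> /(congr1 (@complex.Re R)). Qed.

Lemma ln_det_spectral n (A U : 'M[C]_n) l :
  spectral_decomp A U l -> ln (complex.Re (\det A)) = \sum_j ln (l 0 j).
Proof. by move=> A_sd; rewrite (spectral_decomp_det A_sd) ln_prod //; case: A_sd. Qed.

Lemma ln_det_density_le n (A U : 'M[C]_n) l :
  spectral_decomp A U l -> \tr A = 1 ->
  n%:R^-1 * ln (complex.Re (\det A)) <= - ln n%:R.
Proof.
move=> A_sd trA; rewrite (ln_det_spectral A_sd).
by apply: mean_ln_le_Nln_card; [case: A_sd | exact: spectral_decomp_sum1 A_sd trA].
Qed.

Lemma ln_trace_mpow_ge n (rho T U V : 'M[C]_n) l mu a :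
  spectral_decomp rho U l -> spectral_decomp T V mu -> \tr T = 1 -> 1 < a ->
  a * (ln n%:R + n%:R^-1 * ln (complex.Re (\det rho)))
    <= ln (complex.Re (\tr (mpow rho a *m mpow T (1 - a)))).
Proof.
move=> rho_sd T_sd trT a_gt1.
have [U' [l' [rho_sd' ->]]] := mpow_spectral_decomp a rho_sd.
have [V' [mu' [T_sd' ->]]] := mpow_spectral_decomp (1 - a) T_sd.
have [uU' l'_gt0 _] := rho_sd'; have [uV' mu'_gt0 _] := T_sd'.
have ln_detT := ln_det_density_le T_sd' trT.
rewrite (ln_det_spectral T_sd') in ln_detT.
rewrite (ln_det_spectral rho_sd') Re_mxtrace_conj_diag.
have ln_powR_sum (s : R) (k : 'rV[R]_n) :
    \sum_i ln (map_mx (fun x => powR x s) k 0 i) = s * \sum_i ln (k 0 i).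
  by rewrite mulr_sumr; apply: eq_bigr => i _; rewrite mxE ln_powR.
have powR_gt0_mx (s : R) (k : 'rV[R]_n) :
    (forall j, 0 < k 0 j) -> forall i, 0 < map_mx (fun x => powR x s) k 0 i.
  by move=> k_gt0 i; rewrite mxE powR_gt0.
have := ln_doubly_stochastic_sum_ge
  (sum_eq1_dim_gt0 (spectral_decomp_sum1 T_sd' trT))
  (powR_gt0_mx a l' l'_gt0) (powR_gt0_mx (1 - a) mu' mu'_gt0)
  (sqnorm_mx_doubly_stochastic (unitary_mxadjM uU' uV')).
rewrite !ln_powR_sum.
set L := ln _ in ln_detT *; set ni := _^-1 in ln_detT *.
set Sl := \sum_j ln (l' 0 j); set Sm := \sum_j ln (mu' 0 j) in ln_detT *.
have : 0 <= (a - 1) * (- L - ni * Sm) by apply: mulr_ge0; lra.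
nra.
Qed.

Lemma logb_bound_scaled n (b a d : R) :
  a / (a - 1) * (logb b n%:R + n%:R^-1 * logb b d)
  = a * (ln n%:R + n%:R^-1 * ln d) * ((a - 1)^-1 / ln b).
Proof. by rewrite /logb; ring. Qed.

Lemma Dalpha_ge n (b a : R) (rho T U V : 'M[C]_n) l mu :
  1 < b -> 1 < a -> spectral_decomp rho U l -> spectral_decomp T V mu -> \tr T = 1 ->
  a / (a - 1) * (logb b n%:R + n%:R^-1 * logb b (complex.Re (\det rho)))
    <= Dalpha b a rho T.
Proof.
move=> b_gt1 a_gt1 rho_sd T_sd trT.
have scale_ge0 : 0 <= (a - 1)^-1 / ln b.
  by rewrite mulr_ge0 // invr_ge0 ltW // ?ln_gt0 // subr_gt0.
rewrite logb_bound_scaled /Dalpha /logb [X in _ <= X]mulrCA.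
apply: (ler_wpM2r scale_ge0).
exact: ln_trace_mpow_ge rho_sd T_sd trT a_gt1.
Qed.

Lemma renyi_bound_le0 n (b a : R) (rho U : 'M[C]_n) l :
  1 < b -> 1 < a -> spectral_decomp rho U l -> \tr rho = 1 ->
  a / (a - 1) * (logb b n%:R + n%:R^-1 * logb b (complex.Re (\det rho))) <= 0.
Proof.
move=> b_gt1 a_gt1 rho_sd tr_rho.
have scale_ge0 : 0 <= (a - 1)^-1 / ln b.
  by rewrite mulr_ge0 // invr_ge0 ltW // ?ln_gt0 // subr_gt0.
rewrite logb_bound_scaled; apply: mulr_le0_ge0 scale_ge0.
apply: mulr_ge0_le0; first lra.
by have := ln_det_density_le rho_sd tr_rho; lra.
Qed.

End RenyiBound.

Theorem mainTheorem6 (R : realType) (b : R) (dA dB : nat)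
    (rho : 'M[R[i]]_(dA * dB)) (a : R) :
  1 < b -> posdef rho -> density rho -> 1 < a ->
  a / (a - 1) * (logb b (dA * dB)%:R
                 + ((dA * dB)%:R)^-1 * logb b (complex.Re (\det rho)))
  <= Ialpha b a rho.
Proof.
move=> b_gt1 rho_pd [_ tr_rho] a_gt1.
have [U [l rho_sd]] := posdef_spectral_decomp rho_pd.
have dB_gt0 : (0 < dB)%N.
  have := sum_eq1_dim_gt0 (spectral_decomp_sum1 rho_sd tr_rho).
  by rewrite muln_gt0 => /andP[].
rewrite /Ialpha; set S := (X in inf X).
have [[x Sx] | S0] := pselect (S !=set0)%classic; last first.
  (* [inf set0 = 0]: the bound must then be nonpositive, which AM-GM gives. *)
  rewrite (_ : S = set0) ?inf0; last exact/nonemptyPn.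
  exact: renyi_bound_le0 b_gt1 a_gt1 rho_sd tr_rho.
apply: lb_le_inf; first by exists x.
move=> _ [sigma [sigma_pd [_ tr_sigma] ->]].
have [U1 [l1 rhoA_sd]] := posdef_spectral_decomp (posdef_ptraceB dB_gt0 rho_pd).
have [U2 [l2 sigma_sd]] := posdef_spectral_decomp sigma_pd.
apply: Dalpha_ge b_gt1 a_gt1 rho_sd (spectral_decomp_tens rhoA_sd sigma_sd) _.
by rewrite mxtrace_tens mxtrace_ptraceB tr_rho tr_sigma mulr1.
Qed.
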